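(* Let $q$ be a prime power, let $0 \le n_1 \le n$, and let ${\bf A} = ({\bf A}_1 \mid {\bf A}_2) \in \mathrm{GF}(q)^{a \times n}$ and ${\bf B} = ({\bf B}_1 \mid {\bf B}_2) \in \mathrm{GF}(q)^{b \times n}$, where ${\bf A}_1 \in \mathrm{GF}(q)^{a \times n_1}$ and ${\bf B}_1 \in \mathrm{GF}(q)^{b \times n_1}$. Then for $i = 1$ and $i=2$, $$d_{\mathrm{S}}(R({\bf A}_i), R({\bf B}_i)) \le d_{\mathrm{S}}(R({\bf A}), R({\bf B})) \quad\text{and}\quad d_{\mathrm{I}}(R({\bf A}_i), R({\bf B}_i)) \le d_{\mathrm{I}}(R({\bf A}), R({\bf B})).$$
   Context: For a matrix ${\bf M}$ over $\mathrm{GF}(q)$, $R({\bf M})$ denotes its row space. For subspaces $U,V$ of $\mathrm{GF}(q)^m$, the subspace distance is $d_{\mathrm{S}}(U,V) = \dim(U+V) - \dim(U\cap V) = 2\dim(U+V) - \dim U - \dim V$ and the injection distance is $d_{\mathrm{I}}(U,V) = \dim(U+V) - \min\{\dim U, \dim V\}$. *)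

From HB Require Import structures.
From mathcomp Require Import all_boot all_order all_algebra.
Set Implicit Arguments. Unset Strict Implicit. Unset Printing Implicit Defensive.
Import GRing.Theory.
Local Open Scope ring_scope.

(* Row spaces R(M) are represented (as in mxalgebra) by the matrices
   themselves: dim R(M) = \rank M, R(A)+R(B) = (A + B)%MS,
   R(A) cap R(B) = (A :&: B)%MS. *)

Definition subspace_dist (F : fieldType) (m1 m2 n : nat)
  (A : 'M[F]_(m1, n)) (B : 'M[F]_(m2, n)) : nat :=
  (\rank (A + B)%MS - \rank (A :&: B)%MS)%N.

Definition injection_dist (F : fieldType) (m1 m2 n : nat)
  (A : 'M[F]_(m1, n)) (B : 'M[F]_(m2, n)) : nat :=
  (\rank (A + B)%MS - minn (\rank A) (\rank B))%N.

From HB Require Import structures.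
From mathcomp Require Import all_boot all_order all_algebra.
From mathcomp Require Import zify.
Import GRing.Theory.
Local Open Scope ring_scope.

(* Restricting to a block of columns is right multiplication by a matrix M,
   and the rank lost under X |-> X M is \rank (X :&: kermx M), which grows
   with the row space of X.  Hence passing from (A, B) to (A M, B M) can only
   decrease each of rank(A+B) - rank A and rank(A+B) - rank B, and both
   distances are built from these two gaps. *)

Section DistanceMulmx.

Variable F : fieldType.
Implicit Types (a b n p : nat).

Lemma mxrank_mul_loss_monotone {m1 m2 n p} {X : 'M[F]_(m1, n)}
    {Y : 'M[F]_(m2, n)} (M : 'M[F]_(n, p)) :
  (X <= Y)%MS -> (\rank X - \rank (X *m M) <= \rank Y - \rank (Y *m M))%N.
Proof.
move=> sXY.
have kerXY : (\rank (X :&: kermx M) <= \rank (Y :&: kermx M))%N.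
  by apply/mxrankS/capmxS.
have := mxrank_mul_ker X M; have := mxrank_mul_ker Y M; lia.
Qed.

Lemma leq_rank_addsmx_mul_gap a b n p (A : 'M[F]_(a, n)) (B : 'M[F]_(b, n))
    (M : 'M[F]_(n, p)) :
  (\rank (A *m M + B *m M)%MS - \rank (A *m M) <= \rank (A + B)%MS - \rank A)%N.
Proof.
rewrite -addsmxMr.
have := mxrank_mul_loss_monotone M (addsmxSl A B).
have := mxrankS (addsmxSl (A *m M) (B *m M)); rewrite -addsmxMr.
have := mxrankM_maxl A M; have := mxrankM_maxl (A + B)%MS M; lia.
Qed.

Lemma subspace_distE a b n (A : 'M[F]_(a, n)) (B : 'M[F]_(b, n)) :
  subspace_dist A B = (\rank (A + B)%MS - \rank A + (\rank (A + B)%MS - \rank B))%N.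
Proof.
rewrite /subspace_dist; have := mxrank_sum_cap A B.
have := mxrankS (addsmxSl A B); have := mxrankS (addsmxSr A B); lia.
Qed.

Lemma injection_distE a b n (A : 'M[F]_(a, n)) (B : 'M[F]_(b, n)) :
  injection_dist A B = maxn (\rank (A + B)%MS - \rank A) (\rank (A + B)%MS - \rank B).
Proof. by rewrite /injection_dist; lia. Qed.

Lemma subspace_dist_mulmx a b n p (A : 'M[F]_(a, n)) (B : 'M[F]_(b, n))
    (M : 'M[F]_(n, p)) :
  (subspace_dist (A *m M) (B *m M) <= subspace_dist A B)%N.
Proof.
rewrite !subspace_distE; apply: leq_add; first exact: leq_rank_addsmx_mul_gap.
by rewrite addsmxC [(A + B)%MS]addsmxC leq_rank_addsmx_mul_gap.
Qed.

Lemma injection_dist_mulmx a b n p (A : 'M[F]_(a, n)) (B : 'M[F]_(b, n))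
    (M : 'M[F]_(n, p)) :
  (injection_dist (A *m M) (B *m M) <= injection_dist A B)%N.
Proof.
rewrite !injection_distE geq_max !leq_max leq_rank_addsmx_mul_gap /=.
by rewrite addsmxC [(A + B)%MS]addsmxC leq_rank_addsmx_mul_gap orbT.
Qed.

End DistanceMulmx.

Theorem lemma1 (F : finFieldType) (a b n1 n2 : nat)
  (A : 'M[F]_(a, n1 + n2)) (B : 'M[F]_(b, n1 + n2)) :
  [/\ (subspace_dist (lsubmx A) (lsubmx B) <= subspace_dist A B)%N,
      (injection_dist (lsubmx A) (lsubmx B) <= injection_dist A B)%N,
      (subspace_dist (rsubmx A) (rsubmx B) <= subspace_dist A B)%N &
      (injection_dist (rsubmx A) (rsubmx B) <= injection_dist A B)%N].
Proof.
have lsubmxE m (X : 'M[F]_(m, n1 + n2)) : lsubmx X = X *m lsubmx 1%:M.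
  by rewrite mulmx_lsub mulmx1.
have rsubmxE m (X : 'M[F]_(m, n1 + n2)) : rsubmx X = X *m rsubmx 1%:M.
  by rewrite mulmx_rsub mulmx1.
rewrite (lsubmxE _ A) (lsubmxE _ B) (rsubmxE _ A) (rsubmxE _ B).
by split; [apply: subspace_dist_mulmx | apply: injection_dist_mulmx
         | apply: subspace_dist_mulmx | apply: injection_dist_mulmx].
Qed.
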